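(* Let $r$ be a prime power and let $k,m$ be positive integers satisfying $\frac{r^k-1}{r-1}=\frac{m}{\gcd(m,r-1)}$. Let $h(x)\in\mathbb{F}_r[x]$ be a monic factor of the cyclotomic polynomial $\Phi_m(x)$ (viewed in $\mathbb{F}_r[x]$) that is irreducible over $\mathbb{F}_r$. Then $\deg h=k$, and the cyclic $[m,k]_r$ code with parity-check polynomial $h(x)$ is equidistant, with every nonzero codeword having Hamming weight $m\cdot\frac{r^k-r^{k-1}}{r^k-1}$.
   Context: $\Phi_m(x)=\prod_{d\mid m}(x^d-1)^{\mu(m/d)}$ is the $m$-th cyclotomic polynomial ($\mu$ the Möbius function); it has integer coefficients and is reduced modulo the characteristic to give an element of $\mathbb{F}_r[x]$; it divides $x^m-1$. Identify $\mathbb{F}_r^m$ with $\mathbb{F}_r[x]/(x^m-1)$ via $(c_0,\dots,c_{m-1})\leftrightarrow\sum c_ix^i$; a cyclic code is an ideal of this ring. For a monic divisor $h(x)$ of $x^m-1$, the cyclic code with parity-check polynomial $h(x)$ is the ideal generated by $g(x)=(x^m-1)/h(x)$; its dimension is $\deg h$. An $[m,k]_r$ code is a $k$-dimensional subspace of $\mathbb{F}_r^m$. The Hamming weight of a vector is its number of nonzero entries; a code is equidistant if all pairs of distinct codewords have the same Hamming distance. *)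

From mathcomp Require Import all_boot all_order all_algebra all_field.
Set Implicit Arguments. Unset Strict Implicit. Unset Printing Implicit Defensive.
Import GRing.Theory.
Local Open Scope ring_scope.

(* Codewords (c_0,...,c_{m-1}) are identified with polynomials of size <= m
   (representatives of F[x]/(x^m - 1)). *)

Definition hweight (F : fieldType) (m : nat) (c : {poly F}) : nat :=
  #|[set i : 'I_m | c`_i != 0]|.

Definition hdist (F : fieldType) (m : nat) (c1 c2 : {poly F}) : nat :=
  #|[set i : 'I_m | c1`_i != c2`_i]|.

(* The cyclic code of length m with parity-check polynomial h: the ideal of
   F[x]/(x^m-1) generated by g = (x^m-1)/h, i.e. the set of reductions
   (a * g) mod (x^m - 1). *)
Definition cyclic_code (F : fieldType) (m : nat) (h : {poly F}) (c : {poly F}) : Prop :=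
  exists a : {poly F}, c = (a * (('X^m - 1) %/ h)) %% ('X^m - 1).

From mathcomp Require Import all_boot all_order all_algebra all_field.
From mathcomp Require Import ring zify.
Set Implicit Arguments.
Unset Strict Implicit.
Unset Printing Implicit Defensive.
Import GRing.Theory.
Local Open Scope ring_scope.

(* Let K = F[x]/(h), a field with r ^ d elements (d = deg h), and let beta be
   the class of x in K; write g = gcd(m, r - 1) and N = m / g.
   1. As h | Phi_m and m is invertible in F, beta is a primitive m-th root of
      unity in K (root_Phi_prim_root); in particular h | x^m - 1.
   2. As m | r^k - 1, the map y |-> y ^ (r ^ k) fixes F and beta, hence all of
      K, so #|K| <= r ^ k, i.e. d <= k.
   3. The map psi (t, c) = c * beta ^ t from Z/m x F^* to K^* has fibers of
      equal size, at most g over 1.  Since m (r - 1) = g (r^k - 1) >= g #|K^*|,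
      psi is onto K^*, all its fibers have g elements, and d = k.
   4. The codeword of a is (a (x^m - 1)/h) mod (x^m - 1); its coordinate i is
      lam (beta ^ (m - i) a) for a nonzero F-linear functional lam : K -> F,
      which is nonzero on r^k - r^(k-1) elements.  Counting the pairs (t, c)
      with lam (c beta^t a) != 0 once directly and once through psi gives
      wt * (r - 1) = g (r^k - r^(k-1)), i.e. wt (r^k - 1) = m (r^k - r^(k-1)).
   Distances reduce to weights by linearity of the code. *)

Section Counting.
Variables T U : finType.

Lemma card_in_bij (A : {set T}) (B : {set U}) (f : T -> U) (g : U -> T) :
    (forall x, x \in A -> f x \in B) -> (forall y, y \in B -> g y \in A) ->
    {in A, cancel f g} -> {in B, cancel g f} -> #|A| = #|B|.
Proof.
move=> fAB gBA fK gK; rewrite -(card_in_imset (can_in_inj fK)).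
apply: eq_card => y; apply/imsetP/idP => [[x xA ->]|yB]; first exact: fAB.
by exists (g y); rewrite ?gBA ?gK.
Qed.

Lemma card_uniform_fibers (A : {set T}) (f : T -> U) (n : nat) (P : pred U) :
    (forall y, y \in f @: A -> #|[set x in A | f x == y]| = n) ->
  #|[set x in A | P (f x)]| = (n * #|[set y in f @: A | P y]|)%N.
Proof.
move=> fibn; rewrite -sum1_card (partition_big f (mem (f @: A))) /=; last first.
  by move=> x; rewrite inE => /andP[xA _]; apply: imset_f.
rewrite mulnC -sum_nat_const.
rewrite [RHS](eq_bigl (fun y => (y \in f @: A) && P y)) => [|y]; last by rewrite inE.
rewrite big_mkcondr /=; apply: eq_bigr => y yA; rewrite sum1_card.
case: ifP => Py; first rewrite -(fibn y yA); [apply: eq_card | apply: eq_card0] => x;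
  by rewrite unfold_in !inE; case: (f x =P y) => [->|]; rewrite ?Py ?andbT ?andbF.
Qed.
End Counting.

Lemma leq_mul_squeeze (a b c d : nat) : (a <= c -> b <= d -> 0 < c -> 0 < d ->
  a * b = c * d -> a = c /\ b = d)%N.
Proof. by move=> *; split; nia. Qed.

Lemma coef0_rotate (R : fieldType) (m i : nat) (c : {poly R}) :
  (size c <= m)%N -> (i < m)%N -> (('X^(m - i) * c) %% ('X^m - 1))`_0 = c`_i.
Proof.
move=> size_c lt_im; set lo := take_poly i c; set hi := drop_poly i c.
have lo_small : (size ('X^(m - i) * lo + hi)%R < size ('X^m - 1 : {poly R})%R)%N.
  rewrite size_XnsubC ?(leq_ltn_trans (leq0n i)) // ltnS.
  rewrite (leq_trans (size_polyD _ _)) // geq_max size_drop_poly.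
  rewrite (leq_trans (leq_subr _ _) size_c) andbT.
  have [->|lo_neq0] := eqVneq lo 0; first by rewrite mulr0 size_poly0.
  rewrite size_mul ?expf_neq0 ?polyX_eq0 // size_polyXn addSn /=.
  by rewrite -{2}(subnK (ltnW lt_im)) leq_add2l size_take_poly.
have -> : 'X^(m - i) * c = ('X^(m - i) * lo + hi) + hi * ('X^m - 1).
  rewrite -{1}(poly_take_drop i c) -/lo -/hi mulrDr mulrCA -exprD subnK ?(ltnW lt_im) //.
  by ring.
rewrite modpD modp_mull addr0 modp_small //.
by rewrite coefD coefXnM subn_gt0 lt_im coef_drop_poly add0r.
Qed.

Section CyclotomicRoots.
Variable L : fieldType.
Local Notation Phi n := (map_poly (intr : int -> L) 'Phi_n).

Lemma Xn_sub1_prod_Phi n : (0 < n)%N -> 'X^n - 1 = \prod_(d <- divisors n) Phi d.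
Proof.
move=> n_gt0; rewrite -rmorph_prod prod_Cyclotomic //.
by rewrite rmorphB /= map_polyXn rmorph1.
Qed.

Lemma Phi_dvd_Xn_sub1 n : (0 < n)%N -> Phi n %| 'X^n - 1.
Proof.
move=> n_gt0; rewrite Xn_sub1_prod_Phi // (bigD1_seq n) ?divisors_uniq //=.
  exact: dvdp_mulIl.
by rewrite -dvdn_divisors.
Qed.

(* x^n - 1 is separable when n is invertible, so its factors Phi_n and Phi_d,
   d a proper divisor of n, are coprime. *)
Lemma Phi_coprime n d : (0 < n)%N -> n%:R != 0 :> L -> (d %| n)%N -> d != n ->
  coprimep (Phi n) (Phi d).
Proof.
move=> n_gt0 nL dn dNn; apply: (separable_coprime (separable_Xn_sub_1 nL)).
have dn' : d \in divisors n by rewrite -dvdn_divisors.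
rewrite Xn_sub1_prod_Phi // (bigD1_seq n) ?divisors_uniq -?dvdn_divisors //=.
rewrite -big_filter (bigD1_seq d) ?filter_uniq ?divisors_uniq ?mem_filter ?dNn //=.
by rewrite mulrA dvdp_mulIl.
Qed.

(* A root z of Phi_n has some order d | n; z is then a root of some Phi_e with
   e | d, and coprimality of Phi_n and Phi_e forces e = d = n. *)
Lemma root_Phi_prim_root n z : (0 < n)%N -> n%:R != 0 :> L ->
  root (Phi n) z -> n.-primitive_root z.
Proof.
move=> n_gt0 nL Phiz.
have zn : z ^+ n = 1.
  apply/eqP; rewrite -subr_eq0.
  by have := root_dvdp (Phi_dvd_Xn_sub1 n_gt0) Phiz; rewrite rootE !hornerE.
have [d zd dn] := prim_order_exists n_gt0 zn.
have [<- //|dNn] := eqVneq d n.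
have d_gt0 : (0 < d)%N := prim_order_gt0 zd.
have : root ('X^d - 1) z by rewrite rootE !hornerE prim_expr_order ?subrr.
rewrite Xn_sub1_prod_Phi // rootE horner_prod prodf_seq_eq0 => /hasP[e].
rewrite -dvdn_divisors // => ed /= Phi_e_z.
have eNn : e != n by apply: contraNneq dNn => en; rewrite eqn_leq dvdn_leq // -en dvdn_leq.
have := coprimep_root (Phi_coprime n_gt0 nL (dvdn_trans ed dn) eNn) Phiz.
by rewrite Phi_e_z.
Qed.
End CyclotomicRoots.

Section FiniteFieldCharacteristic.
Variable F : finFieldType.

Lemma card_pchar_pow :
  exists2 p, p \in [pchar F] & exists2 e, (0 < e)%N & #|F| = (p ^ e)%N.
Proof.
have [p _ pF] := finPcharP F; exists p => //; exists (logn p #|F|); last first.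
  exact: card_pprimeChar pF.
rewrite lt0n; apply: contraTneq (finNzRing_gt1 F) => e0.
by rewrite (card_pprimeChar pF) /= e0.
Qed.

Lemma card_pchar_nat : [pchar F].-nat #|F|.
Proof.
have [p pF [e _ ->]] := card_pchar_pow.
by rewrite pnatX pnatE ?pF ?(pcharf_prime pF).
Qed.

Lemma natr_card_eq0 : #|F|%:R = 0 :> F.
Proof.
have [p pF [e e_gt0 ->]] := card_pchar_pow.
by rewrite natrX (pcharf0 pF) expr0n eqn0Ngt e_gt0.
Qed.

Lemma natr_dvd_pred_cardX_neq0 m k :
  (0 < k)%N -> (m %| (#|F| ^ k).-1)%N -> m%:R != 0 :> F.
Proof.
move=> k_gt0 /dvdnP[t def_t]; apply: contra_neq (oner_neq0 F) => m0.
have q_gt0 : (0 < #|F| ^ k)%N by rewrite expn_gt0 (ltnW (finNzRing_gt1 F)).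
have : (#|F| ^ k)%:R = 0 :> F by rewrite natrX natr_card_eq0 expr0n eqn0Ngt k_gt0.
by rewrite -(prednK q_gt0) -addn1 natrD def_t natrM m0 mulr0 add0r.
Qed.

Lemma expf_card_pred (c : F) : c != 0 -> c ^+ #|F|.-1 = 1.
Proof.
move=> c_neq0; apply: (mulIf c_neq0); rewrite mul1r -exprSr prednK ?expf_card //.
exact: ltn_trans (finNzRing_gt1 F).
Qed.
End FiniteFieldCharacteristic.

Section ResidueField.
Variable F : finFieldType.
Variable h : {poly F}.
Hypothesis hI : monic_irreducible_poly h.
Local Notation K := {poly %/ h with hI}.
Local Notation r := #|F|.

Definition residue : {rmorphism {poly F} -> K} := in_qpoly h.
Definition constK : {rmorphism F -> K} := qpolyC h.
Definition beta : K := residue 'X.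

Lemma residue_eq0 p : (residue p == 0) = (h %| p).
Proof. by rewrite -val_eqE /= -Pdiv.IdomainMonic.modpE mk_monicE ?hI. Qed.

Lemma residue_val (y : K) : residue (val y) = y.
Proof. by apply: val_inj; rewrite /= Pdiv.Ring.rmodp_small // size_mk_monic. Qed.

Lemma val_residue p : val (residue p) = p %% h.
Proof. by rewrite /= -Pdiv.IdomainMonic.modpE mk_monicE ?hI. Qed.

Lemma residue_horner p : residue p = (map_poly constK p).[beta].
Proof. by rewrite -[in LHS](comp_polyXr p) [LHS]in_qpoly_comp_horner. Qed.

Lemma residueC c : residue c%:P = constK c.
Proof. by rewrite residue_horner map_polyC hornerC. Qed.

Section PrimitiveRoot.
Variable m : nat.
Hypothesis m_gt0 : (0 < m)%N.
Hypothesis m_neq0 : m%:R != 0 :> F.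
Hypothesis h_dvd_Phi : h %| map_poly (intr : int -> F) 'Phi_m.

(* beta is a root of Phi_m in K, hence a primitive m-th root of unity. *)
Lemma beta_prim : m.-primitive_root beta.
Proof.
apply: root_Phi_prim_root m_gt0 _ _; first by rewrite -(rmorph_nat constK) fmorph_eq0.
have -> : map_poly (intr : int -> K) 'Phi_m =
          map_poly constK (map_poly (intr : int -> F) 'Phi_m).
  by rewrite -map_poly_comp; apply: eq_map_poly => z /=; rewrite rmorph_int.
by rewrite /root -residue_horner residue_eq0.
Qed.

Lemma beta_neq0 : beta != 0.
Proof. by rewrite (prim_root_eq0 beta_prim) -lt0n. Qed.

Lemma beta_expr_mod t : beta ^+ (t %% m) = beta ^+ t.
Proof. exact: expr_mod (prim_expr_order beta_prim). Qed.

Lemma h_dvd_Xm_sub1 : h %| 'X^m - 1.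
Proof.
by rewrite -residue_eq0 rmorphB rmorphXn rmorph1 /= prim_expr_order ?subrr ?beta_prim.
Qed.

(* The generator polynomial gen of the code, and the functional lam on K
   reading off coordinate 0 of the codeword attached to a residue. *)
Local Notation M := ('X^m - 1 : {poly F}).
Definition gen := M %/ h.
Definition coord0 (p : {poly F}) : F := ((p * gen) %% M)`_0.
Definition lam (y : K) : F := coord0 (val y).

Lemma gen_mul_h : gen * h = M.
Proof. exact: divpK h_dvd_Xm_sub1. Qed.

Lemma size_M : size M = m.+1.
Proof. by rewrite size_XnsubC. Qed.

Lemma gen_neq0 : gen != 0.
Proof. by apply/eqP => gen0; have := size_M; rewrite -gen_mul_h gen0 mul0r size_poly0. Qed.

Lemma size_gen_le : (size gen <= m)%N.
Proof.
have h_gt1 : (1 < size h)%N by case: hI => [[]].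
have h_neq0 : h != 0 by rewrite -size_poly_gt0 ltnW.
have := size_M; rewrite -gen_mul_h size_mul ?gen_neq0 //.
by case: (size h) h_gt1 => [|[|s]] // _; rewrite !addnS => -[<-]; apply: leq_addr.
Qed.

Lemma coord0D p q : coord0 (p + q) = coord0 p + coord0 q.
Proof. by rewrite /coord0 mulrDl modpD coefD. Qed.

(* Multiples of h give the zero codeword, so coord0 factors through K. *)
Lemma coord0_mod p : coord0 p = coord0 (p %% h).
Proof.
rewrite {1}(divp_eq p h) coord0D /coord0 -mulrA [h * _]mulrC gen_mul_h.
by rewrite modp_mull coef0 add0r.
Qed.

Lemma lam_residue p : lam (residue p) = coord0 p.
Proof. by rewrite /lam val_residue -coord0_mod. Qed.

Lemma lamD y z : lam (y + z) = lam y + lam z.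
Proof. by rewrite -(residue_val y) -(residue_val z) -rmorphD !lam_residue coord0D. Qed.

Lemma lam_const c y : lam (constK c * y) = c * lam y.
Proof.
rewrite -(residue_val y) -residueC -rmorphM !lam_residue /coord0.
by rewrite -mulrA mul_polyC modpZl coefZ.
Qed.

Lemma lam0 : lam 0 = 0.
Proof. by rewrite -(mul0r 0) -(rmorph0 constK) lam_const mul0r. Qed.

Lemma coef_codeword a i : (i < m)%N ->
  ((a * gen) %% M)`_i = lam (beta ^+ (m - i) * residue a).
Proof.
move=> lt_im; rewrite -rmorphXn -rmorphM lam_residue /coord0 -mulrA.
rewrite -(modp_mul 'X^(m - i)) coef0_rotate // -ltnS -size_M ltn_modp.
by rewrite -size_poly_gt0 size_M.
Qed.

(* If lam vanished, all the coordinates of the codeword gen would vanish. *)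
Lemma lam_nonzero : exists y, lam y != 0.
Proof.
apply/existsP; apply: contraTT gen_neq0 => /existsPn lam_eq0.
rewrite negbK; apply/eqP/polyP => i; rewrite coef0.
have [lt_im|le_mi] := ltnP i m; last by rewrite nth_default // (leq_trans size_gen_le).
have := lam_eq0 (beta ^+ (m - i) * residue 1); rewrite negbK -coef_codeword // mul1r.
by rewrite modp_small => [/eqP|]; rewrite ?size_XnsubC ?ltnS ?size_gen_le.
Qed.

(* lam is a nonzero F-linear functional, so its level sets are translates of
   its kernel, which therefore has index r in K. *)
Lemma card_ker_lam : (#|[set z : K | lam z == 0%R]| * r)%N = #|K|.
Proof.
have [z0 lam_z0] := lam_nonzero.
pose z1 := constK (lam z0)^-1 * z0.
have lam_z1 : lam z1 = 1 by rewrite lam_const mulVf.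
have lam_shift c z : lam (z + constK c * z1) = lam z + c.
  by rewrite lamD lam_const lam_z1 mulr1.
have lam_onto : lam @: [set: K] = [set: F].
  apply/setP => c; rewrite !inE; apply/imsetP; exists (constK c * z1) => //.
  by rewrite -[constK c * z1]add0r lam_shift lam0 add0r.
have fiber_lam c : c \in lam @: [set: K] ->
    #|[set z in [set: K] | lam z == c]| = #|[set z : K | lam z == 0]|.
  move=> _; pose tr c' (z : K) := z + constK c' * z1.
  apply: (@card_in_bij _ _ _ _ (tr (- c)) (tr c)) => z; rewrite /tr.
  - by rewrite !inE /= lam_shift => /eqP ->; rewrite subrr.
  - by rewrite !inE /= lam_shift => /eqP ->; rewrite add0r.
  - by move=> _; rewrite rmorphN mulNr subrK.
  - by move=> _; rewrite rmorphN mulNr addrK.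
have -> : #|K| = #|[set z in [set: K] | xpredT (lam z)]|.
  by rewrite -cardsT; apply: eq_card => z; rewrite !inE.
rewrite (@card_uniform_fibers _ _ _ _ _ xpredT fiber_lam) lam_onto -cardsT.
by congr (_ * _)%N; apply: eq_card => c; rewrite !inE.
Qed.

Lemma card_lam_neq0 :
  #|[set z : K | lam z != 0]| = (r ^ (size h).-1 - r ^ (size h).-1.-1)%N.
Proof.
have d_gt0 : (0 < (size h).-1)%N by rewrite -ltnS prednK; case: hI => [[]] // /ltnW.
have ker : #|[set z : K | lam z == 0]| = (r ^ (size h).-1.-1)%N.
  apply/eqP; rewrite -(eqn_pmul2r (ltnW (finNzRing_gt1 F))) card_ker_lam.
  by rewrite card_qfpoly -expnSr prednK.
have -> : [set z : K | lam z != 0] = ~: [set z : K | lam z == 0].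
  by apply/setP => z; rewrite !inE.
by rewrite cardsCs setCK ker card_qfpoly.
Qed.

Lemma codeword_residue_neq0 a : (a * gen) %% M != 0 -> residue a != 0.
Proof.
apply: contraNneq => /eqP; rewrite residue_eq0 => /dvdpP[b ->].
by rewrite -mulrA [h * _]mulrC gen_mul_h modp_mull.
Qed.

Section Degree.
Variable k : nat.
Hypothesis k_gt0 : (0 < k)%N.
Hypothesis m_dvd_pred : (m %| (r ^ k).-1)%N.

(* Raising to the power r ^ k fixes F and beta (as beta ^+ m = 1), and is
   additive in characteristic p; hence it fixes every element of K. *)
Lemma expr_cardX_fixed (y : K) : y ^+ (r ^ k) = y.
Proof.
set q := (r ^ k)%N.
have q_gt0 : (0 < q)%N by rewrite expn_gt0 (ltnW (finNzRing_gt1 F)).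
have q_char : [pchar K].-nat q.
  by rewrite (eq_pnat _ (fmorph_pchar constK)) pnatX card_pchar_nat.
have beta_q : beta ^+ q = beta.
  have /eqP beta_q1 : beta ^+ q.-1 == 1 by rewrite -(prim_order_dvd beta_prim).
  by rewrite -(prednK q_gt0) exprS beta_q1 mulr1.
have const_q c : constK c ^+ q = constK c.
  suff cq : c ^+ q = c by rewrite -rmorphXn cq.
  rewrite /q; elim: k => [|j IHj]; first exact: expr1.
  by rewrite expnSr exprM IHj expf_card.
rewrite -(residue_val y); elim/poly_ind: (val y) => [|p c IHp].
  by rewrite rmorph0 expr0n gtn_eqF.
by rewrite rmorphD rmorphM /= exprDn_pchar // exprMn IHp beta_q residueC const_q.
Qed.

(* Every element of K is a root of x^(r^k) - x, so #|K| <= r ^ k. *)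
Lemma card_K_le : (#|K| <= r ^ k)%N.
Proof.
set q := (r ^ k)%N.
have q_gt1 : (1 < q)%N by rewrite -(expn0 r) ltn_exp2l ?finNzRing_gt1.
pose P : {poly K} := 'X^q - 'X.
have size_P : size P = q.+1 by rewrite size_polyDl size_polyXn // size_polyN size_polyX.
rewrite cardE -ltnS -size_P max_poly_roots ?enum_uniq //.
  by rewrite -size_poly_gt0 size_P.
by apply/allP => y _; rewrite /root !hornerE expr_cardX_fixed subrr.
Qed.

Lemma deg_h_le : ((size h).-1 <= k)%N.
Proof. by rewrite -(leq_exp2l _ _ (finNzRing_gt1 F)) -card_qfpoly card_K_le. Qed.

Local Notation g := (gcdn m r.-1).
Local Notation N := (m %/ gcdn m r.-1)%N.
Hypothesis pred_cardX : ((r ^ k).-1 = N * r.-1)%N.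

Lemma m_eq_Ng : m = (N * g)%N.
Proof. by rewrite divnK ?dvdn_gcdl. Qed.

Lemma N_gt0 : (0 < N)%N.
Proof. by move: m_gt0; rewrite {1}m_eq_Ng muln_gt0 => /andP[]. Qed.

Definition pairs := [set x : 'I_m * F | x.2 != 0].
Definition psi (x : 'I_m * F) : K := constK x.2 * beta ^+ x.1.
Definition fiber (y : K) := [set x in pairs | psi x == y].

Lemma in_fiber x y : (x \in fiber y) = (x \in pairs) && (psi x == y).
Proof. by rewrite inE. Qed.

(* Multiplication by c * beta ^ s acts on pairs by a translation. *)
Definition shift (s : nat) (c : F) (x : 'I_m * F) : 'I_m * F :=
  (Ordinal (ltn_pmod (x.1 + s) m_gt0), x.2 * c).

Lemma psi_shift s c x : psi (shift s c x) = constK c * beta ^+ s * psi x.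
Proof. by rewrite /psi /= beta_expr_mod rmorphM exprD mulrACA mulrC. Qed.

Lemma shift_shift s1 c1 s2 c2 x :
  shift s2 c2 (shift s1 c1 x) = shift (s1 + s2) (c1 * c2) x.
Proof. by congr pair; [apply: val_inj; rewrite /= modnDml addnA | rewrite mulrA]. Qed.

Lemma shift_m1 x : shift m 1 x = x.
Proof.
by case: x => t c; congr pair; [apply: val_inj; rewrite /= modnDr modn_small | rewrite mulr1].
Qed.

Lemma shift_pairs s c x : c != 0 -> (shift s c x \in pairs) = (x \in pairs).
Proof. by move=> c_neq0; rewrite !inE mulf_eq0 (negPf c_neq0) orbF. Qed.

(* All nonempty fibers of psi are translates of the fiber over 1. *)
Lemma card_fiber y : y \in psi @: pairs -> #|fiber y| = #|fiber 1|.
Proof.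
case/imsetP=> -[t0 c0]; rewrite inE /= => c0_neq0 ->.
have c0V_neq0 : c0^-1 != 0 by rewrite invr_eq0.
have t0_le : (t0 <= m)%N by apply: ltnW.
apply: (@card_in_bij _ _ _ _ (shift (m - t0) c0^-1) (shift t0 c0)) => x.
- rewrite !in_fiber shift_pairs // psi_shift => /andP[-> /eqP ->] /=.
  rewrite fmorphV mulrACA /= mulVf ?fmorph_eq0 // mul1r -exprD subnK //.
  by rewrite prim_expr_order ?beta_prim.
- by rewrite !in_fiber shift_pairs // psi_shift => /andP[-> /eqP ->]; rewrite mulr1 eqxx.
- by move=> _; rewrite shift_shift subnK // mulVf // shift_m1.
- by move=> _; rewrite shift_shift subnKC // mulfV // shift_m1.
Qed.

(* c * beta ^ t = 1 with c in F^* forces beta ^ (t (r - 1)) = 1, hence N | t. *)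
Lemma fiber1_N_dvd x : x \in fiber 1 -> (N %| x.1)%N.
Proof.
rewrite in_fiber inE => /andP[c_neq0 /eqP psi_x].
have m_dvd : (m %| x.1 * r.-1)%N.
  rewrite (prim_order_dvd beta_prim) exprM.
  have := congr1 (fun z => z ^+ r.-1) psi_x; rewrite /= exprMn -rmorphXn.
  by rewrite expf_card_pred // rmorph1 mul1r expr1n => ->.
have : (m %| gcdn (x.1 * r.-1) (x.1 * m))%N by rewrite dvdn_gcd m_dvd dvdn_mull.
by rewrite -muln_gcdr gcdnC {1}m_eq_Ng dvdn_pmul2r // gcdn_gt0 m_gt0.
Qed.

(* x |-> x.1 / N is injective on the fiber over 1, which thus has at most
   g elements. *)
Lemma card_fiber1_le : (#|fiber 1%R| <= g)%N.
Proof.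
have lt_g (t : 'I_m) : (t %/ N < g)%N by rewrite ltn_divLR ?N_gt0 // mulnC -m_eq_Ng.
rewrite -[g]card_ord; apply: (@leq_card_in _ _ (fun x => Ordinal (lt_g x.1))).
move=> x y x1 y1 /(congr1 val) /= eq_div.
have eq_t : x.1 = y.1.
  apply: val_inj; rewrite /= -(divnK (fiber1_N_dvd x1)) -(divnK (fiber1_N_dvd y1)).
  by rewrite eq_div.
move: x1 y1; rewrite !in_fiber /psi eq_t => /andP[_ /eqP psi_x] /andP[_ /eqP psi_y].
have /fmorph_inj eq_c : constK x.2 = constK y.2.
  by apply: (mulIf (expf_neq0 y.1 beta_neq0)); rewrite psi_x psi_y.
by move: x y eq_t eq_c {psi_x psi_y eq_div} => [t1 c1] [t2 c2] /= -> ->.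
Qed.

Lemma card_pairs : #|pairs| = (m * r.-1)%N.
Proof.
have -> : pairs = setX [set: 'I_m] [set~ (0 : F)] by apply/setP => -[t c]; rewrite !inE.
by rewrite cardsX cardsT card_ord cardsC1.
Qed.

Lemma psi_image_sub : psi @: pairs \subset [set~ 0].
Proof.
apply/subsetP => y /imsetP[x]; rewrite inE => c_neq0 ->.
by rewrite !inE mulf_neq0 ?fmorph_eq0 ?expf_neq0 ?beta_neq0.
Qed.

Lemma card_pairs_fibers : (#|fiber 1%R| * #|psi @: pairs|)%N = (m * r.-1)%N.
Proof.
rewrite -card_pairs [in RHS](_ : pairs = [set x in pairs | xpredT (psi x)]); last first.
  by apply/setP => x; rewrite !inE andbT.
rewrite (@card_uniform_fibers _ _ pairs psi _ xpredT card_fiber); congr (_ * _)%N.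
by apply: eq_card => y; rewrite !inE andbT.
Qed.

(* #|fiber 1| * #|image| = g * (r ^ k - 1), while the two factors are bounded
   by g and by #|K^*| <= r ^ k - 1: all these bounds are equalities. *)
Theorem psi_surjective :
  [/\ (size h).-1 = k, psi @: pairs = [set~ 0] & #|fiber 1%R| = g].
Proof.
have r_gt1 := finNzRing_gt1 F.
have im_le : (#|psi @: pairs| <= (r ^ k).-1)%N.
  apply: leq_trans (subset_leq_card psi_image_sub) _.
  by rewrite cardsC1 -!subn1 leq_sub2r ?card_K_le.
have g_gt0 : (0 < g)%N by rewrite gcdn_gt0 m_gt0.
have q_gt0 : (0 < (r ^ k).-1)%N by rewrite pred_cardX muln_gt0 N_gt0 -subn1 subn_gt0.
have [fiber1 im_card] : #|fiber 1%R| = g /\ #|psi @: pairs| = (r ^ k).-1.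
  apply: leq_mul_squeeze card_fiber1_le im_le g_gt0 q_gt0 _.
  by rewrite card_pairs_fibers pred_cardX {1}m_eq_Ng mulnAC mulnC.
have deg_h : (size h).-1 = k.
  apply/anti_leq; rewrite deg_h_le -(leq_exp2l _ _ r_gt1) /=.
  have := subset_leq_card psi_image_sub; rewrite cardsC1 card_qfpoly im_card.
  by rewrite -!subn1 leq_sub2rE // expn_gt0 (ltnW r_gt1).
split=> //; apply/eqP.
by rewrite eqEcard psi_image_sub cardsC1 card_qfpoly deg_h im_card leqnn.
Qed.

Lemma card_fiber_neq0 y : y != 0 -> #|fiber y| = g.
Proof.
have [_ im_psi fiber1] := psi_surjective.
by move=> y_neq0; rewrite card_fiber ?im_psi ?inE.
Qed.

(* Double counting of the pairs (t, c) with lam (c * beta ^ t * al) != 0. *)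
Lemma card_lam_orbit (al : K) : al != 0 ->
  (#|[set t : 'I_m | lam (beta ^+ t * al) != 0]%R| * r.-1 =
   g * #|[set z : K | lam z != 0%R]|)%N.
Proof.
move=> al_neq0; set P := fun y => lam (y * al) != 0.
have -> : (#|[set t : 'I_m | lam (beta ^+ t * al) != 0]%R| * r.-1)%N =
          #|[set x in pairs | P (psi x)]|.
  rewrite -(cardsC1 (0 : F)) -cardsX; apply: eq_card => -[t c]; rewrite !inE /P /psi /=.
  by rewrite -mulrA lam_const mulf_eq0 negb_or andbC; case: (c != 0).
have [_ im_psi _] := psi_surjective.
rewrite (@card_uniform_fibers _ _ _ _ g P) => [|y]; last first.
  by rewrite im_psi !inE; exact: card_fiber_neq0.
congr (_ * _)%N; rewrite im_psi.
apply: (@card_in_bij _ _ _ _ (fun y => y * al) (fun z => z / al)) => [y|z|y _|z _].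
- by rewrite !inE => /andP[].
- rewrite !inE /P divfK // => lam_z; rewrite lam_z andbT.
  apply: contraNneq lam_z => /eqP.
  by rewrite mulf_eq0 invr_eq0 (negPf al_neq0) orbF => /eqP ->; rewrite lam0.
- exact: mulfK.
- exact: divfK.
Qed.

(* The involution i |-> -i of 'I_m, matching coordinate i of a codeword with
   the power beta ^ (m - i) of coef_codeword. *)
Definition negI (i : 'I_m) : 'I_m := Ordinal (ltn_pmod (m - i) m_gt0).

Lemma negIK : involutive negI.
Proof.
move=> i; apply: val_inj => /=; have [i0|i_gt0] := posnP i.
  by rewrite i0 subn0 modnn subn0 modnn.
by rewrite (modn_small (m := m - i)) ?subKn ?modn_small ?ltn_subrL ?i_gt0 // ltnW.
Qed.

Lemma hweight_codeword a : residue a != 0 ->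
  (hweight m ((a * gen) %% M) * r.-1 = g * #|[set z : K | lam z != 0%R]|)%N.
Proof.
move=> a_neq0; rewrite -(card_lam_orbit a_neq0); congr (_ * _)%N.
apply: (@card_in_bij _ _ _ _ negI negI) => [i|t|i _|t _]; rewrite ?negIK //.
- by rewrite !inE coef_codeword // beta_expr_mod.
- by rewrite !inE coef_codeword // -[in X in X -> _](negIK t) /= beta_expr_mod.
Qed.

End Degree.
End PrimitiveRoot.
End ResidueField.

Lemma pred_expn_eq (r k m : nat) :
  ((r ^ k - 1) %/ (r - 1) = m %/ gcdn m (r - 1))%N ->
  ((r ^ k).-1 = m %/ gcdn m r.-1 * r.-1)%N.
Proof. by rewrite !subn1 => E; rewrite -E divnK // dvdn_pred_predX. Qed.

(* (m / gcd(m, n)) n is lcm(m, n), a multiple of m. *)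
Lemma dvdn_divgcd_mul (m n : nat) : (m %| m %/ gcdn m n * n)%N.
Proof. by rewrite divn_mulAC ?dvdn_gcdl // dvdn_lcml. Qed.

Lemma hdist_hweight (F : fieldType) (m : nat) (c1 c2 : {poly F}) :
  hdist m c1 c2 = hweight m (c1 - c2).
Proof. by apply: eq_card => i; rewrite !inE coefB subr_eq0. Qed.

Lemma cyclic_codeB (F : fieldType) (m : nat) (h c1 c2 : {poly F}) :
  cyclic_code m h c1 -> cyclic_code m h c2 -> cyclic_code m h (c1 - c2).
Proof. by move=> [a1 ->] [a2 ->]; exists (a1 - a2); rewrite mulrBl modpD modpN. Qed.

Theorem corollary3p3 (F : finFieldType) (r k m : nat) :
  r = #|F| -> (0 < k)%N -> (0 < m)%N ->
  ((r ^ k - 1) %/ (r - 1) = m %/ gcdn m (r - 1))%N ->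
  forall h : {poly F},
    h \is monic -> h %| map_poly (intr : int -> F) 'Phi_m -> irreducible_poly h ->
    (size h).-1 = k /\
    (forall c1 c2 : {poly F}, cyclic_code m h c1 -> cyclic_code m h c2 -> c1 != c2 ->
       (hdist m c1 c2 * (r ^ k - 1) = m * (r ^ k - r ^ k.-1))%N) /\
    (forall c : {poly F}, cyclic_code m h c -> c != 0 ->
       (hweight m c * (r ^ k - 1) = m * (r ^ k - r ^ k.-1))%N).
Proof.
move=> -> k_gt0 m_gt0 /pred_expn_eq pred_q h h_monic h_dvd_Phi h_irr.
have hI : monic_irreducible_poly h := (h_irr, h_monic).
have m_dvd : (m %| (#|F| ^ k).-1)%N by rewrite pred_q dvdn_divgcd_mul.
have m_neq0 := natr_dvd_pred_cardX_neq0 k_gt0 m_dvd.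
have [deg_h _ _] := psi_surjective hI m_gt0 m_neq0 h_dvd_Phi k_gt0 m_dvd pred_q.
have weight c : cyclic_code m h c -> c != 0 ->
    (hweight m c * (#|F| ^ k - 1) = m * (#|F| ^ k - #|F| ^ k.-1))%N.
  case=> a -> c_neq0.
  have a_neq0 := codeword_residue_neq0 hI m_gt0 m_neq0 h_dvd_Phi c_neq0.
  rewrite subn1 pred_q mulnA mulnAC.
  rewrite (hweight_codeword m_gt0 m_neq0 h_dvd_Phi k_gt0 m_dvd pred_q a_neq0).
  rewrite (card_lam_neq0 hI m_gt0 m_neq0 h_dvd_Phi) deg_h.
  by rewrite mulnAC [(_ * (m %/ _))%N]mulnC divnK ?dvdn_gcdl.
split=> //; split=> // c1 c2 code1 code2 c12; rewrite hdist_hweight.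
by apply: weight; [apply: cyclic_codeB | rewrite subr_eq0].
Qed.
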